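(* For every $n\ge1$, the formula $\Phi_n$ separates $\mathcal{A}$ from $\mathcal{B}$, i.e. every trace in $\mathcal A$ satisfies $\Phi_n$ and no trace in $\mathcal B$ satisfies $\Phi_n$.
   Context: Fix $n\ge1$, atomic propositions $AP=\{\tilde p,\tilde q\}\cup P\cup Q$ with $P=\{p_1,\dots,p_n\}$, $Q=\{q_1,\dots,q_n\}$ (all distinct), $\Sigma=2^{AP}$. Formulae use literals, $\land,\lor$, $\mathsf F$ and $\mathsf O$, interpreted on finite non-empty traces $\sigma\in\Sigma^+$ at positions $0\le i<|\sigma|$: $\mathsf F\phi$ holds at $i$ iff $\phi$ holds at some $j$ with $i\le j<|\sigma|$; $\mathsf O\phi$ holds at $i$ iff $\phi$ holds at some $0\le j\le i$; $\sigma$ satisfies $\phi$ iff $\phi$ holds at position $0$. $\Phi_n := \mathsf{F}\big(\tilde q\land\bigwedge_{i=1}^n\big((q_i\land\mathsf{O}(\tilde p\land p_i))\lor(\neg q_i\land\mathsf{O}(\tilde p\land\neg p_i))\big)\big)$. Let $\alpha(n)=2^{n+1}(n+2)^2$. Let $T_P=\{\tau\in\Sigma:\tilde p\in\tau,\ \tau\subseteq P\cup\{\tilde p\}\}$ and $T_Q=\{\tau\in\Sigma:\tilde q\in\tau,\ \tau\subseteq Q\cup\{\tilde q\}\}$; for $\tau\in T_Q$ let $\overline\tau\in T_P$ be the letter with $p_i\in\overline\tau$ iff $q_i\in\tau$ for all $i$. Fix an arbitrary strict total order $\prec$ on $T_Q$, and let $\mathrm{Enum}$ be the unique word in $(\emptyset^{\alpha(n)}\cdot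 T_Q)^{2^n}\cdot\emptyset^{\alpha(n)}$ (here $\emptyset$ denotes the letter with no propositions) that lists every element of $T_Q$ exactly once in increasing $\prec$-order. For $\tau\in T_Q$, $\mathrm{Enum}_{-\tau}$ is obtained from $\mathrm{Enum}$ by deleting the unique position of letter $\tau$ together with the $\alpha(n)$ positions of letter $\emptyset$ immediately preceding it. Define $\mathcal A=\{\emptyset^j\cdot\overline\tau\cdot\mathrm{Enum}: j\in\mathbb N,\tau\in T_Q\}$ and $\mathcal B=\{\emptyset^j\cdot\overline\tau\cdot\mathrm{Enum}_{-\tau}: j\in\mathbb N,\tau\in T_Q\}$. *)

From mathcomp Require Import all_boot.
Set Implicit Arguments. Unset Strict Implicit. Unset Printing Implicit Defensive.

(* Atomic propositions for parameter n:
   inl true = ~p, inl false = ~q, inr (i,true) = p_(i+1), inr (i,false) = q_(i+1). *)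
Definition AP (n : nat) : finType := (bool + ('I_n * bool))%type.
Definition tp {n} : AP n := inl true.
Definition tq {n} : AP n := inl false.
Definition pp {n} (i : 'I_n) : AP n := inr (i, true).
Definition qq {n} (i : 'I_n) : AP n := inr (i, false).

Definition letter (n : nat) := {set AP n}.

Inductive formula (n : nat) : Type :=
| Lit : bool -> AP n -> formula n
| FAnd : formula n -> formula n -> formula n
| FOr : formula n -> formula n -> formula n
| Fut : formula n -> formula n
| Once : formula n -> formula n.

(* Semantics at position i of a finite trace s (meaningful for i < size s). *)
Fixpoint holds {n} (phi : formula n) (s : seq (letter n)) (i : nat) : Prop :=
  match phi with
  | Lit b a => (a \in nth set0 s i) = b
  | FAnd f g => holds f s i /\ holds g s i
  | FOr f g => holds f s i \/ holds g s i
  | Fut f => exists j, i <= j < size s /\ holds f s j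
  | Once f => exists j, j <= i /\ holds f s j
  end.

Definition sat {n} (s : seq (letter n)) (phi : formula n) : Prop :=
  0 < size s /\ holds phi s 0.

Definition conj_i {n} (i : 'I_n) : formula n :=
  FOr (FAnd (Lit true (qq i)) (Once (FAnd (Lit true tp) (Lit true (pp i)))))
      (FAnd (Lit false (qq i)) (Once (FAnd (Lit true tp) (Lit false (pp i))))).

Definition Phi (n : nat) : formula n :=
  Fut (foldl (@FAnd n) (Lit true tq) [seq conj_i i | i <- enum 'I_n]).

Definition alpha (n : nat) : nat := 2 ^ n.+1 * (n + 2) ^ 2.

Definition TP (n : nat) : {set letter n} :=
  [set t : letter n | (tp \in t) && (t \subset tp |: [set pp i | i : 'I_n])].
Definition TQ (n : nat) : {set letter n} :=
  [set t : letter n | (tq \in t) && (t \subset tq |: [set qq i | i : 'I_n])].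

Definition bar {n} (t : letter n) : letter n :=
  tp |: [set pp i | i : 'I_n & qq i \in t].

(* Enum, given the increasing listing ts of T_Q:
   (emptyset^alpha t_1) ... (emptyset^alpha t_{2^n}) emptyset^alpha *)
Definition Enum {n} (ts : seq (letter n)) : seq (letter n) :=
  flatten [seq rcons (nseq (alpha n) set0) t | t <- ts] ++ nseq (alpha n) set0.

Definition Enum_minus {n} (w : seq (letter n)) (t : letter n) : seq (letter n) :=
  let k := index t w in take (k - alpha n) w ++ drop k.+1 w.

Definition strict_total_on {n} (lt : rel (letter n)) : Prop :=
  [/\ {in TQ n, irreflexive lt},
      {in TQ n & &, transitive lt} &
      {in TQ n &, forall x y, x != y -> lt x y || lt y x}].

Definition inA {n} (ts : seq (letter n)) (s : seq (letter n)) : Prop :=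
  exists j t, t \in TQ n /\ s = nseq j set0 ++ bar t :: Enum ts.
Definition inB {n} (ts : seq (letter n)) (s : seq (letter n)) : Prop :=
  exists j t, t \in TQ n /\ s = nseq j set0 ++ bar t :: Enum_minus (Enum ts) t.

From mathcomp Require Import all_boot.

Set Implicit Arguments.
Unset Strict Implicit.
Unset Printing Implicit Defensive.

(* In a trace of A or B the only letter carrying ~p is [bar t], so the i-th conjunct
   of Phi_n forces the witnessing ~q-letter to agree with t on q_i.  Among letters of
   T_Q that letter must therefore be t itself: it exists after [bar t] in A, and its
   only occurrence has been deleted in B.  Neither the order on T_Q nor the padding
   length alpha(n) plays any role. *)

Lemma nth_nseq_cat (T : Type) (x0 : T) j s m :
  nth x0 (nseq j x0 ++ s) (j + m) = nth x0 s m.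
Proof. by rewrite cat_nseq nth_ncons ltnNge leq_addr addKn. Qed.

Lemma mem_nth_set0 (T : finType) (s : seq {set T}) a r :
  a \in nth set0 s r -> nth set0 s r \in s.
Proof.
case: (ltnP r (size s)) => [/mem_nth -> // | le_s_r].
by rewrite nth_default // inE.
Qed.

Section Letters.
Variable n : nat.
Implicit Types t x : letter n.

Lemma pp_inj : injective (@pp n).
Proof. by move=> i j [->]. Qed.

Lemma mem_bar_pp t i : (pp i \in bar t) = (qq i \in t).
Proof. by rewrite in_setU1 (mem_imset _ _ pp_inj) inE. Qed.

Lemma tp_in_bar t : tp \in bar t.
Proof. exact: setU11. Qed.

Lemma tq_notin_bar t : tq \notin bar t.
Proof. by rewrite in_setU1 negb_or /=; apply/imsetP => -[]. Qed.

Lemma tq_in_TQ x : x \in TQ n -> tq \in x.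
Proof. by rewrite inE => /andP[]. Qed.

Lemma tp_notin_TQ x : x \in TQ n -> tp \notin x.
Proof.
rewrite inE => /andP[_ /subsetP subx]; apply/negP => /subx.
by rewrite in_setU1 => /orP[// | /imsetP[]].
Qed.

Lemma TQ_eq_qq x t : x \in TQ n -> t \in TQ n ->
  (forall i, (qq i \in x) = (qq i \in t)) -> x = t.
Proof.
rewrite !inE => /andP[tqx /subsetP subx] /andP[tqt /subsetP subt] eq_qq.
apply/setP => y; case: (boolP (y \in tq |: [set qq i | i : 'I_n])).
  by rewrite in_setU1 => /orP[/eqP -> | /imsetP[i _ ->]]; rewrite ?tqx ?tqt.
by move=> yN; apply/idP/idP => [/subx | /subt]; rewrite (negbTE yN).
Qed.

End Letters.

Section Semantics.
Variable n : nat.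
Implicit Types s : seq (letter n).

Lemma holds_foldl_FAnd (I : eqType) (g : I -> formula n) f r s p :
  holds (foldl (@FAnd n) f [seq g x | x <- r]) s p <->
  holds f s p /\ {in r, forall x, holds (g x) s p}.
Proof.
elim: r f => [|y r IHr] f /=; first by split=> [|[]].
split=> [/IHr [[hf hy] hr] | [hf hyr]].
  by split=> // x; rewrite in_cons => /predU1P[-> | /hr].
apply/IHr; split=> [|x xr]; first by split=> //; apply: hyr; rewrite mem_head.
by apply: hyr; rewrite in_cons xr orbT.
Qed.

Lemma holds_conj_iP (i : 'I_n) s q :
  holds (conj_i i) s q <->
  exists r, [/\ r <= q, tp \in nth set0 s r
                 & (pp i \in nth set0 s r) = (qq i \in nth set0 s q)].
Proof.
rewrite /=; split=> [[] [hq [r [le_rq [hp hpi]]]] | [r [le_rq hp hpi]]].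
- by exists r; rewrite hq hpi.
- by exists r; rewrite hq hpi.
by case: (qq i \in _) hpi => hpi; [left | right]; split=> //; exists r; rewrite hpi.
Qed.

Lemma sat_PhiP s :
  sat s (Phi n) <->
  exists2 q, q < size s & tq \in nth set0 s q /\ forall i, holds (conj_i i) s q.
Proof.
split=> [[_ [q [/andP[_ lt_qs] /holds_foldl_FAnd [htq hconj]]]] | [q lt_qs [htq hconj]]].
  by exists q => //; split=> // i; apply: hconj; rewrite mem_enum.
split; first exact: leq_ltn_trans lt_qs.
by exists q; split; [exact/andP | apply/holds_foldl_FAnd; split=> // i _].
Qed.

End Semantics.

Section Separation.
Variables (n : nat) (j : nat) (t : letter n) (w : seq (letter n)).

Let s := nseq j set0 ++ bar t :: w.

Lemma sat_Phi_bar : tq \in t -> t \in w -> sat s (Phi n).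
Proof.
move=> tqt tw; set q := j + (index t w).+1.
have nth_bar : nth set0 s j = bar t by rewrite -[j]addn0 nth_nseq_cat.
have nth_t : nth set0 s q = t by rewrite nth_nseq_cat /= nth_index.
apply/sat_PhiP; exists q; first by rewrite size_cat size_nseq ltn_add2l ltnS index_mem.
rewrite nth_t; split=> // i; apply/holds_conj_iP; exists j.
by rewrite leq_addr nth_bar nth_t tp_in_bar mem_bar_pp.
Qed.

Lemma not_sat_Phi_bar : t \in TQ n ->
  (forall y, y \in w -> y = set0 \/ y \in TQ n :\ t) -> ~ sat s (Phi n).
Proof.
move=> tQ w_letters /sat_PhiP [q lt_qs [htq hconj]].
have s_letters y : y \in s -> [\/ y = set0, y = bar t | y \in TQ n :\ t].
  rewrite mem_cat in_cons => /orP[/nseqP[-> _] | /predU1P[-> | /w_letters[-> | ?]]];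
  by [apply: Or31 | apply: Or32 | apply: Or33].
have tp_bar r : tp \in nth set0 s r -> nth set0 s r = bar t.
  move=> hp; have /s_letters[s_r0 | // | /setD1P[_ /tp_notin_TQ]] := mem_nth_set0 hp.
    by move: hp; rewrite s_r0 inE.
  by rewrite hp.
case/s_letters: (mem_nth set0 lt_qs) htq => [-> | -> | /setD1P[xt xQ] _].
- by rewrite inE.
- by rewrite (negbTE (tq_notin_bar t)).
apply/negP: xt; rewrite negbK; apply/eqP/TQ_eq_qq => // i.
have [r [_ /tp_bar -> <-]] := (holds_conj_iP i s q).1 (hconj i).
exact: mem_bar_pp.
Qed.

End Separation.

Section Enumeration.
Variable n : nat.
Implicit Types (ts w : seq (letter n)) (t : letter n).

Lemma Enum_sub ts : {subset Enum ts <= set0 :: ts}.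
Proof.
move=> x; rewrite mem_cat => /orP[/flattenP[_ /mapP[t tts ->]] | /nseqP[-> _]].
  by rewrite mem_rcons in_cons => /predU1P[-> | /nseqP[-> _]]; rewrite !inE ?tts ?eqxx ?orbT.
exact: mem_head.
Qed.

Lemma ts_sub_Enum ts : {subset ts <= Enum ts}.
Proof.
move=> t tts; rewrite mem_cat; apply/orP; left; apply/flattenP.
by exists (rcons (nseq (alpha n) set0) t); [exact: map_f | rewrite mem_rcons mem_head].
Qed.

Lemma count_Enum ts t : t != set0 -> count_mem t (Enum ts) = count_mem t ts.
Proof.
move=> t0; have nseq0 m : count_mem t (nseq m set0) = 0.
  by rewrite count_nseq /= eq_sym (negbTE t0).
rewrite count_cat nseq0 addn0; elim: ts => //= y ts IHts.
by rewrite count_cat -cats1 count_cat nseq0 IHts /= addn0.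
Qed.

Lemma Enum_minus_subseq_rem w t : subseq (Enum_minus w t) (rem t w).
Proof.
rewrite remE /Enum_minus cat_subseq // -(take_takel _ (leq_subr (alpha n) _)).
exact: take_subseq.
Qed.

Lemma mem_Enum_minus w t : count_mem t w = 1 -> {subset Enum_minus w t <= [predD1 w & t]}.
Proof.
move=> count_t x /(mem_subseq (Enum_minus_subseq_rem w t)) x_rem.
rewrite inE (mem_rem x_rem) andbT; apply: contraTneq x_rem => ->.
by rewrite -has_pred1 has_count count_mem_rem count_t eqxx.
Qed.

End Enumeration.

Theorem lemma3 (n : nat) (hn : 1 <= n) (lt : rel (letter n))
  (hlt : strict_total_on lt) (ts : seq (letter n))
  (hts_enum : forall t, (t \in ts) = (t \in TQ n))
  (hts_uniq : uniq ts) (hts_sorted : sorted lt ts) :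
  (forall s, inA ts s -> sat s (Phi n)) /\ (forall s, inB ts s -> ~ sat s (Phi n)).
Proof.
split=> _ [j [t [tQ ->]]].
  by apply: sat_Phi_bar (tq_in_TQ tQ) _; apply: ts_sub_Enum; rewrite hts_enum.
have t0 : t != set0 by apply: contraTneq (tq_in_TQ tQ) => ->; rewrite inE.
have count_t : count_mem t (Enum ts) = 1.
  by rewrite count_Enum // count_uniq_mem // hts_enum tQ.
apply: not_sat_Phi_bar => // y /(mem_Enum_minus count_t) /andP[yt /Enum_sub].
rewrite in_cons => /predU1P[-> | yts]; [by left | right].
by rewrite in_setD1 yt -hts_enum.
Qed.
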